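(* Let $(X,d)$ be a metric space, $\mu$ a non-atomic Borel measure on $X$, $\beta>0$, and let $\Gamma^*\subset\Gamma^\mu$ be a family of paths closed under taking non-trivial subpaths that has the $\mu$-arc-chord property with exponent $\beta$. Let $f:X\to\mathbb R$ be continuous and $g:X\to[0,\infty]$ measurable with $|f(x)-f(y)|\le d(x,y)^\beta(g(x)+g(y))$ for all $x,y\in X$. Then there is $C>0$ such that $Cg$ is an upper gradient of $f$.
   Context: A path is a continuous map $\gamma:[a,b]\to X$; a subpath is a restriction to a subinterval, trivial if that interval is a point; $\mathrm{Im}(\gamma)=\gamma([a,b])$. $\mu$ non-atomic: $\mu(\{x\})=0$ for all $x$. $\Gamma^\mu$ is the set of all non-trivial injective paths $\gamma$ with $0<\mu(\mathrm{Im}(\tilde\gamma))<\infty$ for every non-trivial subpath $\tilde\gamma$. For Borel $g\ge0$, $\int_\gamma g:=\int_{\mathrm{Im}(\gamma)}g\,d\mu$. $\mu$-arc-chord property with exponent $\beta$: there is $C_\mu>0$ with $\mathrm{diam}(\mathrm{Im}(\gamma))^\beta\le C_\mu\,\mu(\mathrm{Im}(\gamma))$ for all $\gamma\in\Gamma^*$. A nonnegative function $\rho$ is an upper gradient of $f$ if $|f(x)-f(y)|\le\int_\gamma\rho$ for every $\gamma\in\Gamma^*$ with endpoints $x,y$. *)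

From HB Require Import structures.
From mathcomp Require Import all_boot all_order all_algebra.
From mathcomp Require Import all_classical all_reals all_analysis.
From mathcomp Require Import measurable_realfun.
Set Implicit Arguments. Unset Strict Implicit. Unset Printing Implicit Defensive.
Import Order.TTheory GRing.Theory Num.Theory.
Import numFieldNormedType.Exports.
Local Open Scope classical_set_scope.
Local Open Scope ring_scope.

Section Defs.
Variables (R : realType) (X : metricType R).

(* X equipped with a chosen point x0 (MathComp-Analysis measurable types must
   be pointed); the point plays no other role. *)
Definition ptd (x0 : X) : Type := X.
HB.instance Definition _ (x0 : X) := Choice.on (ptd x0).
HB.instance Definition _ (x0 : X) := isPointed.Build (ptd x0) x0.

Definition borel (x0 : X) : measurableType _ :=
  g_sigma_algebraType (@open X : set (set (ptd x0))).

(* A (candidate) gpath: parameter interval [pa, pb] and map pf (only its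
   restriction to [pa, pb] matters). *)
Record gpath := GPath { pa : R; pb : R; pf : R -> X }.

Definition is_path (p : gpath) : Prop :=
  pa p <= pb p /\ {within `[pa p, pb p], continuous (pf p)}.

Definition nontrivial (p : gpath) : Prop := pa p < pb p.

Definition path_injective (p : gpath) : Prop :=
  forall s t, pa p <= s <= pb p -> pa p <= t <= pb p -> pf p s = pf p t -> s = t.

Definition Im (p : gpath) : set X := pf p @` `[pa p, pb p].

Definition subpath (p : gpath) (c e : R) : gpath := GPath c e (pf p).

Definition is_subinterval (p : gpath) (c e : R) : Prop :=
  pa p <= c /\ c <= e /\ e <= pb p.

Definition Gamma_mu (x0 : X) (mu : {measure set (borel x0) -> \bar R}) : set gpath :=
  [set p | is_path p /\ nontrivial p /\ path_injective p /\
     forall c e, is_subinterval p c e -> c < e ->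
       (0 < mu (Im (subpath p c e)))%E /\ (mu (Im (subpath p c e)) < +oo)%E].

Definition subpath_closed (G : set gpath) : Prop :=
  forall p c e, G p -> is_subinterval p c e -> c < e -> G (subpath p c e).

Definition non_atomic (x0 : X) (mu : {measure set (borel x0) -> \bar R}) : Prop :=
  forall x : X, mu [set x] = 0%E.

Definition diam (A : set X) : R := sup [set mdist x y | x in A & y in A].

Definition arc_chord (x0 : X) (mu : {measure set (borel x0) -> \bar R}) (G : set gpath)
  (beta : R) : Prop :=
  exists2 Cmu : R, 0 < Cmu &
    forall p, G p -> (((diam (Im p)) `^ beta)%:E <= Cmu%:E * mu (Im p))%E.

(* line integral of g along p w.r.t. mu: integral over the image *)
Definition path_integral (x0 : X) (mu : {measure set (borel x0) -> \bar R}) (p : gpath)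
  (g : X -> \bar R) : \bar R :=
  (\int[mu]_(x in (Im p : set (borel x0))) g x)%E.

Definition upper_gradient (x0 : X) (mu : {measure set (borel x0) -> \bar R}) (G : set gpath)
  (f : X -> R) (rho : X -> \bar R) : Prop :=
  (forall x, (0 <= rho x)%E) /\
  forall p, G p ->
    (`|f (pf p (pa p)) - f (pf p (pb p))|%:E <= path_integral mu p rho)%E.

End Defs.

From Pilot Require Import Defs.
From HB Require Import structures.
From mathcomp Require Import all_boot all_order all_algebra.
From mathcomp Require Import all_classical all_reals all_analysis.
From mathcomp Require Import measurable_realfun.
From mathcomp Require Import ring lra.
Import Order.TTheory GRing.Theory Num.Theory.
Import numFieldNormedType.Exports.
Set Implicit Arguments. Unset Strict Implicit. Unset Printing Implicit Defensive.
Local Open Scope classical_set_scope.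
Local Open Scope ring_scope.

(* Fix a path h on [a, b].  The arc-chord property and the pointwise bound on f give
   |f u - f v| <= C mu(h[c, e]) (g u + g v) for u, v on any subarc h[c, e].  As mu is
   non-atomic, t |-> mu(h[a, t]) is continuous, so there are initial arcs A_n with
   mu(A_n) = mu(h[a, b]) / 2^n.  Pick z_n in A_n minus A_(n+1) where g is at most its
   average there (up to a small error); then the oscillations |f z_n - f z_(n+1)|
   telescope against the integrals of g over the A_n, and z_n tends to h a.  This gives
   a point z with |f (h a) - f z| <= 6 C I and g z mu(h[a, b]) <= 2 I, where I is the
   integral of g over the path.  The same from h b, and one more oscillation bound along
   the whole path, give |f (h a) - f (h b)| <= 16 C I. *)

Section metric_paths.
Context {R : realType} {X : metricType R}.

Lemma mdist_continuous (x : X) : continuous (mdist x).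
Proof.
move=> y; apply/cvgrPdist_lt => e e0.
apply/metricType_numDomainType.nbhs_mdistP; exists e => // z /= yz.
apply: le_lt_trans yz; have := metric_triangle x y z; have := metric_triangle x z y.
by rewrite (metric_sym z y) ler_norml => ? ?; apply/andP; split; lra.
Qed.

Lemma mdist_le_diam (K : set X) (u v : X) :
  compact K -> K u -> K v -> mdist u v <= diam K.
Proof.
move=> cK Ku Kv; apply: ub_le_sup; last by exists u => //; exists v.
have cdK : compact (mdist u @` K).
  by apply: continuous_compact => //; exact/continuous_subspaceT/mdist_continuous.
have [M [_ /(_ (`|M| + 1))]] := compact_bounded cdK.
rewrite (le_lt_trans (ler_norm _)) ?ltrDl // => /(_ erefl); set B := _ + 1 => HB.
exists (B + B) => _ [x Kx [y Ky <-]].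
have Bx : mdist u x <= B := le_trans (ler_norm _) (HB _ (imageP _ Kx)).
have By : mdist u y <= B := le_trans (ler_norm _) (HB _ (imageP _ Ky)).
by rewrite (le_trans (metric_triangle x u y)) // metric_sym lerD.
Qed.

Lemma within_continuousP (A : set R) (h : R -> X) :
  {within A, continuous h} <->
  forall t, A t -> forall e, 0 < e -> exists2 d, 0 < d &
    forall s, A s -> `|s - t| < d -> mdist (h t) (h s) < e.
Proof.
split => [hc t At e e0 | hc].
  have := proj1 (subspace_continuousP _ _) hc t At.
  move/metricType_numDomainType.cvgrPdist_lt => /(_ e e0).
  rewrite near_withinE /= => /nbhs_ballP [d /= d0 Hd].
  by exists d => // s As st; apply: Hd => //; rewrite /ball /= distrC.
apply/subspace_continuousP => t At.
apply/metricType_numDomainType.cvgrPdist_lt => e e0.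
have [d d0 Hd] := hc t At e e0.
rewrite near_withinE /=; apply/nbhs_ballP; exists d => //= s.
by rewrite /ball /= distrC => st As; apply: Hd.
Qed.

Lemma within_continuous_opp (h : R -> X) (a b : R) :
  {within `[a, b], continuous h} -> {within `[- b, - a], continuous (h \o -%R)}.
Proof.
move=> /within_continuousP hc; apply/within_continuousP => t tI e e0.
have [|d d0 Hd] := hc (- t) _ e e0; first by rewrite /= oppr_itvcc.
exists d => // s sI st; apply: Hd; first by rewrite /= oppr_itvcc.
by rewrite -opprD normrN.
Qed.

Lemma image_opp_itv (h : R -> X) (c d : R) :
  (h \o -%R) @` `[- d, - c] = h @` `[c, d].
Proof. by rewrite -image_comp opp_itv_bnd_bnd /= !opprK. Qed.

End metric_paths.

Lemma compact_measurable_borel {R : realType} {X : metricType R} (x0 : X) (K : set X) :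
  compact K -> measurable (K : set (borel x0)).
Proof.
move=> /(compact_closed (@metric_hausdorff _ X)) Kcl.
rewrite -[K]setCK; apply: measurableC; apply: sub_sigma_algebra.
exact: closed_openC.
Qed.

Lemma compact_segmentI {R : realType} (a b c d : R) : compact (`[a, b] `&` `[c, d]).
Proof. by apply: compact_closedI; [exact: segment_compact|exact: interval_closed]. Qed.

Section arc_measure.
Context {R : realType} {X : metricType R} {x0 : X}.
Variable mu : {measure set (borel x0) -> \bar R}.
Variables (h : R -> X) (a b : R).
Hypotheses (mu_atomless : non_atomic mu) (hc : {within `[a, b], continuous h})
  (mu_arc_fin : (mu (h @` `[a, b] : set (borel x0)) < +oo)%E).

Local Notation arc A := (h @` A : set (borel x0)).

Lemma arc_measurable (A : set R) : compact A -> A `<=` `[a, b] -> measurable (arc A).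
Proof.
move=> cA Aab; apply: compact_measurable_borel.
exact: continuous_compact (continuous_subspaceW Aab hc) cA.
Qed.

Lemma arc_segment_measurable (c e : R) : a <= c -> e <= b -> measurable (arc `[c, e]).
Proof.
move=> ac eb; apply: arc_measurable; first exact: segment_compact.
by apply: subset_itv; rewrite bnd_simp.
Qed.

Lemma arc_measure_fin (A : set R) : compact A -> A `<=` `[a, b] -> mu (arc A) \is a fin_num.
Proof.
move=> cA Aab; rewrite ge0_fin_numE ?measure_ge0 //; apply: le_lt_trans mu_arc_fin.
apply: le_measure; rewrite ?inE; [exact: arc_measurable|exact: arc_segment_measurable|].
exact: image_subset.
Qed.

Lemma arc_measure_shrink s : a <= s <= b -> forall e, 0 < e ->
  exists2 r, 0 < r & (mu (arc (`[a, b] `&` `[(s - r)%R, (s + r)%R])) <= e%:E)%E.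
Proof.
move=> sab e e0.
pose F n := arc (`[a, b] `&` `[s - n.+1%:R^-1, s + n.+1%:R^-1]).
have mF n : measurable (F n) by apply: arc_measurable => [|r []//]; exact: compact_segmentI.
have F_noninc : nonincreasing_seq F.
  move=> n m nm; rewrite subsetEset; apply: image_subset => r [rab].
  have nm' : (m.+1%:R : R)^-1 <= n.+1%:R^-1 by rewrite lef_pV2 ?posrE // ler_nat.
  rewrite /= !in_itv /= => /andP[r1 r2]; split => //.
  apply/andP; split; first by apply: le_trans r1; rewrite lerD2l lerN2.
  by apply: le_trans r2 _; rewrite lerD2l.
have mF0 : (mu (F 0%N) < +oo)%E.
  apply: le_lt_trans mu_arc_fin; apply: le_measure; rewrite ?inE //.
    exact: arc_segment_measurable.
  by apply: image_subset => r [].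
have capF_sub : \bigcap_n F n `<=` [set h s].
  move=> y Fy; apply/mdist_positivity/eqP; rewrite eq_le mdist_ge0 andbT.
  apply/ler_addgt0Pr => eps eps0; rewrite add0r ltW //.
  have [d d0 Hd] := proj1 (within_continuousP _ _) hc s sab eps eps0.
  have [n nd] : exists n : nat, n.+1%:R^-1 < d.
    exists (Num.truncn d^-1); rewrite -[X in _ < X]invrK ltf_pV2 ?posrE ?invr_gt0 //.
    exact: truncnS_gt.
  have [r [rab rs] <-] := Fy n I; rewrite metric_sym; apply: Hd => //.
  move: rs nd; rewrite /= in_itv /=; set q := _^-1 => /andP[r1 r2] qd.
  by rewrite ltr_distlC; apply/andP; split; lra.
have mu_capF : mu (\bigcap_n F n) = 0%E.
  apply/eqP; rewrite eq_le measure_ge0 andbT -(mu_atomless (h s)).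
  apply: le_measure => //; rewrite inE; first exact: bigcapT_measurable.
  by rewrite -image_set1 -set_itv1; apply: arc_segment_measurable; case/andP: sab.
have := nonincreasing_cvg_mu mF0 mF (bigcapT_measurable mF) F_noninc.
rewrite mu_capF => /fine_cvgP [[N _ finF] /cvgrPdist_le /(_ e e0) [N' _ HN]].
exists (maxn N N').+1%:R^-1; first by rewrite invr_gt0.
have finFN : mu (F (maxn N N')) \is a fin_num by apply: finF; rewrite /= leq_maxl.
rewrite -(fineK finFN) lee_fin.
have := HN (maxn N N') (leq_maxr _ _); rewrite /= sub0r normrN.
exact: le_trans (ler_norm _).
Qed.

Lemma arc_measure_split u v : a <= u -> u <= v -> v <= b ->
  fine (mu (arc `[a, u])) <= fine (mu (arc `[a, v])) <=
  fine (mu (arc `[a, u])) + fine (mu (arc `[u, v])).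
Proof.
move=> au uv vb.
have fin c e : a <= c -> e <= b -> mu (arc `[c, e]) \is a fin_num.
  move=> ac eb; apply: arc_measure_fin; first exact: segment_compact.
  by apply: subset_itv; rewrite bnd_simp.
have ma c e : a <= c -> e <= b -> measurable (arc `[c, e]) := @arc_segment_measurable c e.
have av : a <= v := le_trans au uv.
have ub : u <= b := le_trans uv vb.
apply/andP; split; rewrite -lee_fin ?EFinD !fineK ?fin //.
  apply: le_measure; rewrite ?inE; [exact: ma|exact: ma|].
  by apply/image_subset/subset_itv; rewrite bnd_simp.
apply: le_trans (measureU2 _ _ _); [|exact: ma|exact: ma].
apply: le_measure; rewrite ?inE; [exact: ma|by apply: measurableU; exact: ma|].
move=> _ [w + <-]; rewrite /= in_itv /= => /andP[aw wv].
by case: (leP w u) => wu; [left|right]; exists w; rewrite //= in_itv /= ?aw ?wu // (ltW wu).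
Qed.

Lemma initial_arc_measure_continuous :
  {within `[a, b], continuous (fun t => fine (mu (arc `[a, t])))}.
Proof.
apply/(@within_continuousP _ R^o) => t tab e e0.
have [r r0 Hr] := arc_measure_shrink tab (divr_gt0 e0 (ltr0Sn _ 1)).
have key u v : a <= u -> u <= v -> v <= b -> t - r <= u -> v <= t + r ->
    `|fine (mu (arc `[a, u])) - fine (mu (arc `[a, v]))| <= e / 2.
  move=> au uv vb ur vr.
  have /andP[le1 le2] := arc_measure_split au uv vb.
  have : fine (mu (arc `[u, v])) <= e / 2.
    rewrite -lee_fin fineK; last first.
      by apply: arc_measure_fin; [exact: segment_compact|apply: subset_itv; rewrite bnd_simp].
    apply: le_trans Hr; apply: le_measure; rewrite ?inE.
    - by apply: arc_segment_measurable; lra.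
    - by apply: arc_measurable => [|? []//]; exact: compact_segmentI.
    apply: image_subset => w; rewrite /= !in_itv /= => /andP[uw wv].
    by split; apply/andP; split; lra.
  by rewrite distrC ger0_norm ?subr_ge0 //; lra.
exists r => // s sab st; apply: (@le_lt_trans _ _ (e / 2)); last by lra.
move: tab sab st; rewrite /= !in_itv /= => /andP[ta tb] /andP[sa sb].
rewrite ltr_distlC => /andP[s1 s2].
change (`|fine (mu (arc `[a, s])) - fine (mu (arc `[a, t]))| <= e / 2).
by case: (leP t s) => ts; [rewrite distrC|]; apply: key; lra.
Qed.

End arc_measure.

Lemma telescope_dist_le {R : realDomainType} (u phi : nat -> R) :
  (forall n, `|u n - u n.+1| <= phi n - phi n.+1) ->
  forall N, `|u 0%N - u N| <= phi 0%N - phi N.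
Proof.
move=> step; elim=> [|N IH]; first by rewrite !subrr normr0.
by apply: le_trans (ler_distD (u N) _ _) _; have := step N; lra.
Qed.

Section dyadic_chain.
Context d (T : measurableType d) (R : realType) (mu : {measure set T -> \bar R}).
Variable g : T -> \bar R.
Hypotheses (g0 : forall u, (0 <= g u)%E) (mg : measurable_fun setT g).

Lemma exists_lt_average (S : set T) (m J eta : R) :
  measurable S -> mu S = m%:E -> 0 < m -> (\int[mu]_(u in S) g u)%E = J%:E -> 0 < eta ->
  exists2 z, S z & (g z < (J / m + eta)%:E)%E.
Proof.
move=> mS muS m0 intS eta0.
have [//|noz] := pselect (exists2 z, S z & (g z < (J / m + eta)%:E)%E).
have J0 : 0 <= J by rewrite -lee_fin -intS integral_ge0.
have : (\int[mu]_(u in S) (cst (J / m + eta)%:E) u <= \int[mu]_(u in S) g u)%E.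
  apply: ge0_le_integral => //.
  - by move=> u _; rewrite lee_fin /= addr_ge0 ?divr_ge0 // ltW.
  - exact: measurable_funS mg.
  move=> u Su; rewrite leNgt; apply/negP => gu; apply: noz; exists u => //.
rewrite integral_cst // intS muS -EFinM lee_fin mulrDl divfK ?gt_eqF //.
by rewrite gerDl leNgt mulr_gt0.
Qed.

Variables (A : nat -> set T) (f : T -> R) (y C M I : R).
Hypotheses (C0 : 0 < C) (M0 : 0 < M)
  (mA : forall n, measurable (A n)) (A_noninc : forall n, A n.+1 `<=` A n)
  (muA : forall n, mu (A n) = (M / 2 ^+ n)%:E)
  (oscA : forall n u v, A n u -> A n v ->
     (`|f u - f v|%:E <= C%:E * mu (A n) * (g u + g v))%E)
  (f_near : forall e, 0 < e -> exists N, forall u, A N u -> `|y - f u| <= e)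
  (intA0 : (\int[mu]_(u in A 0) g u <= I%:E)%E).

Let w n := M / 2 ^+ n.

Let w_gt0 n : 0 < w n. Proof. by rewrite divr_gt0 // exprn_gt0. Qed.

Let wS n : w n = 2 * w n.+1. Proof. by rewrite /w exprS; field; rewrite expf_neq0. Qed.

Let Ir n := fine (\int[mu]_(u in A n) g u).

Let intA_le n : (\int[mu]_(u in A n) g u <= I%:E)%E.
Proof.
have A_sub0 : A n `<=` A 0 by elim: n => [//|n IH] u /A_noninc /IH.
apply: le_trans intA0; apply: ge0_subset_integral => //; exact: measurable_funS mg.
Qed.

Let intA n : (\int[mu]_(u in A n) g u)%E = (Ir n)%:E.
Proof.
by rewrite fineK // ge0_fin_numE ?integral_ge0 // (le_lt_trans (intA_le n)) ?ltry.
Qed.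

Let Ir_ge0 n : 0 <= Ir n. Proof. by rewrite -lee_fin -intA integral_ge0. Qed.

Let Ir_le n : Ir n <= I. Proof. by rewrite -lee_fin -intA; exact: intA_le. Qed.

Let dyadic_points eta : 0 < eta -> exists z : nat -> T, forall n,
  [/\ A n (z n), g (z n) = (fine (g (z n)))%:E &
      w n.+1 * fine (g (z n)) <= Ir n - Ir n.+1 + eta * w n.+1].
Proof.
move=> eta0; pose P n := A n `\` A n.+1.
have mP n : measurable (P n) := measurableD (mA n) (mA n.+1).
have muP n : mu (P n) = (w n.+1)%:E.
  have -> : mu (P n) = (mu (A n) - mu (A n.+1))%E.
    rewrite (measureD (mA n) (mA n.+1)) ?setIidr //.
    by change (mu (A n) < +oo)%E; rewrite muA ltry.
  by rewrite !muA -EFinB -/(w n) -/(w n.+1) (wS n); congr EFin; ring.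
have intP n : (\int[mu]_(u in P n) g u)%E = (Ir n - Ir n.+1)%:E.
  have AE : A n = P n `|` A n.+1 by rewrite setUC setDUK.
  move: (intA n); rewrite AE ge0_integral_setU //; last 2 first.
  - by rewrite -AE; exact: measurable_funS mg.
  - by rewrite disj_set2E setIC setDIK.
  by rewrite intA EFinB => <-; rewrite addeK.
have /choice[z zP] n :
    exists u, P n u /\ (g u < ((Ir n - Ir n.+1) / w n.+1 + eta)%:E)%E.
  have [u Pu gu] := exists_lt_average (mP n) (muP n) (w_gt0 n.+1) (intP n) eta0.
  by exists u.
exists z => n; have [[Az _] gz] := zP n.
have gzE : g (z n) = (fine (g (z n)))%:E.
  by rewrite fineK // ge0_fin_numE // (lt_le_trans gz) ?leey.
split => //; move: gz; rewrite gzE lte_fin => /ltW /(ler_wpM2l (ltW (w_gt0 n.+1))).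
by rewrite mulrDr mulrCA mulfV ?gt_eqF // mulr1 (mulrC _ eta).
Qed.

Lemma dyadic_chain e : 0 < e -> exists z r,
  [/\ A 0 z, g z = r%:E, r * M <= 2 * I + e & `|y - f z| <= 6 * C * I + e].
Proof.
move=> e0; pose kap := e / (8 * C + 1).
have kap0 : 0 < kap by rewrite divr_gt0 // addr_gt0 // mulr_gt0.
have kapE : e = 8 * (C * kap) + kap.
  by rewrite /kap; field; rewrite gt_eqF // addr_gt0 // mulr_gt0.
have Ckap0 : 0 <= C * kap by rewrite mulr_ge0 ?ltW.
pose eta := kap / M.
have eta0 : 0 < eta by rewrite divr_gt0.
have [z zP] := dyadic_points eta0; pose G n := fine (g (z n)).
have zA n : A n (z n) by have [] := zP n.
have GP n : w n.+1 * G n <= Ir n - Ir n.+1 + eta * w n.+1 by have [] := zP n.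
pose phi n := C * (2 * Ir n + 4 * Ir n.+1 + 4 * (eta * w n)).
have step n : `|f (z n) - f (z n.+1)| <= phi n - phi n.+1.
  have k1 : w n * G n <= 2 * (Ir n - Ir n.+1) + eta * w n.
    by rewrite (wS n); have := GP n; lra.
  have k2 : w n * G n.+1 <= 4 * (Ir n.+1 - Ir n.+2) + eta * w n.
    by rewrite (wS n) (wS n.+1); have := GP n.+1; lra.
  have [_ gz _] := zP n; have [_ gz1 _] := zP n.+1.
  have := oscA (zA n) (A_noninc (zA n.+1)); rewrite muA gz gz1 -!EFinD -!EFinM lee_fin.
  move=> /le_trans; apply; rewrite /phi -mulrBr -mulrA ler_pM2l //.
  rewrite mulrDr -/(w n) -/(G n) -/(G n.+1).
  by rewrite (wS n) in k1 k2 *; lra.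
have w0M : w 0%N = M by rewrite /w expr0 divr1.
have etaM : eta * M = kap by rewrite /eta divfK // gt_eqF.
have ew1 : eta * w 1%N = kap / 2 by rewrite -etaM -w0M (wS 0%N); field.
have phi0 : phi 0%N <= C * (6 * I + 4 * kap).
  rewrite /phi w0M etaM ler_pM2l //; have := Ir_le 0%N; have := Ir_le 1%N; lra.
have phi_ge0 N : 0 <= phi N.
  rewrite /phi mulr_ge0 ?ltW //.
  by have := Ir_ge0 N; have := Ir_ge0 N.+1; have := mulr_gt0 eta0 (w_gt0 N); lra.
have [N fN] := f_near (divr_gt0 e0 (ltr0Sn _ 1)).
have [_ gz0 _] := zP 0%N; exists (z 0%N), (G 0%N); split => //.
- have := GP 0%N; rewrite -w0M (wS 0%N) ew1.
  by have := Ir_le 0%N; have := Ir_ge0 1%N; lra.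
- have := telescope_dist_le step N; have := fN _ (zA N); have := phi_ge0 N.
  have := ler_distD (f (z N)) y (f (z 0%N)); rewrite (distrC (f (z N))).
  by have := phi0; lra.
Qed.

End dyadic_chain.

Lemma exists_dyadic_lt {R : archiRealFieldType} (M c : R) :
  0 < c -> exists N : nat, M / 2 ^+ N < c.
Proof.
move=> c0; exists (Num.truncn (M / c)).+1.
rewrite ltr_pdivrMr ?exprn_gt0 // mulrC -ltr_pdivrMr //.
apply: lt_le_trans (truncnS_gt _) _.
by rewrite -natrX ler_nat; exact: ltnW (ltn_expl _ _).
Qed.

Section path_start.
Context {R : realType} {X : metricType R} {x0 : X}.
Variable mu : {measure set (borel x0) -> \bar R}.
Variables (h : R -> X) (a b : R) (f : X -> R) (g : X -> \bar R) (C M I : R).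

Local Notation arc A := (h @` A : set (borel x0)).

Hypotheses (mu_atomless : non_atomic mu) (ab : a < b)
  (hc : {within `[a, b], continuous h}) (C0 : 0 < C) (muM : mu (arc `[a, b]) = M%:E)
  (arc_pos : forall c e, a <= c -> c < e -> e <= b -> (0 < mu (arc `[c, e]))%E)
  (arc_osc : forall c e, a <= c -> c < e -> e <= b ->
     forall u v, arc `[c, e] u -> arc `[c, e] v ->
     (`|f u - f v|%:E <= C%:E * mu (arc `[c, e]) * (g u + g v))%E)
  (fc : {for h a, continuous f}) (g0 : forall u, (0 <= g u)%E)
  (mg : measurable_fun setT (g : borel x0 -> \bar R))
  (intI : (\int[mu]_(u in arc `[a, b]) g u)%E = I%:E).

Let m t := fine (mu (arc `[a, t])).

Let arc_fin t : a <= t <= b -> mu (arc `[a, t]) = (m t)%:E.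
Proof.
case/andP=> ta tb; rewrite fineK //; apply: arc_measure_fin; rewrite ?muM ?ltry //.
- exact: segment_compact.
- by apply: subset_itv; rewrite bnd_simp.
Qed.

Let mu_fin : (mu (arc `[a, b]) < +oo)%E. Proof. by rewrite muM ltry. Qed.

Let M0 : 0 < M. Proof. by rewrite -lte_fin -muM; exact: arc_pos. Qed.

Lemma dyadic_start_arcs : exists t : nat -> R, forall n,
  [/\ a < t n <= b, t n.+1 <= t n & mu (arc `[a, t n]) = (M / 2 ^+ n)%:E].
Proof.
have m_mono u v : a <= u -> u <= v -> v <= b -> m u <= m v.
  by move=> au uv vb; have /andP[] := arc_measure_split hc mu_fin au uv vb.
have ma : m a = 0 by rewrite /m set_itv1 image_set1 mu_atomless.
have /choice[t tP] : forall n, exists t, a <= t <= b /\ m t = M / 2 ^+ n.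
  move=> n; have m_cont := initial_arc_measure_continuous mu_atomless hc mu_fin.
  have [|t] := @IVT _ m a b (M / 2 ^+ n) (ltW ab) m_cont.
    rewrite ma /m muM /= (min_idPl (ltW M0)) (max_idPr (ltW M0)).
    rewrite divr_ge0 ?exprn_ge0 ?(ltW M0) //= ler_pdivrMr ?exprn_gt0 //.
    by rewrite ler_peMr ?(ltW M0) // exprn_ege1 // ler1n.
  by rewrite in_itv /= => tab mt; exists t.
exists t => n; have [/andP[atn tnb] mtn] := tP n.
have [/andP[_ tn1b] mtn1] := tP n.+1.
have w0 k : 0 < M / 2 ^+ k by rewrite divr_gt0 ?exprn_gt0.
split; last by rewrite arc_fin ?atn ?tnb ?mtn.
- rewrite tnb andbT lt_neqAle atn andbT; apply/eqP => atn'.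
  by have := w0 n; rewrite -mtn -atn' ma ltxx.
- rewrite leNgt; apply/negP => lt; have := m_mono _ _ atn (ltW lt) tn1b.
  have half : M / 2 ^+ n.+1 = M / 2 ^+ n / 2 by rewrite exprS; field; rewrite expf_neq0.
  by rewrite mtn mtn1 half; have := w0 n; lra.
Qed.

Lemma start_arc_near eps : 0 < eps ->
  exists2 s, a < s <= b & forall u, arc `[a, s] u -> `|f (h a) - f u| <= eps.
Proof.
move=> eps0; move: fc => /cvgrPdist_le /(_ eps eps0) /nbhs_ballP [rho /= rho0 f_rho].
have aab : `[a, b]%classic a by rewrite /= in_itv /= lexx ltW.
have [d d0 h_d] := proj1 (within_continuousP _ _) hc a aab rho rho0.
exists (Num.min (a + d / 2) b); first by rewrite lt_min ab ge_min lexx orbT andbT; lra.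
move=> _ [s + <-]; rewrite /= in_itv /= le_min => /andP[sa /andP[s1 sb]].
apply: f_rho; rewrite ballEmdist /=; apply: h_d; first by rewrite /= in_itv /= sa.
by rewrite ger0_norm; lra.
Qed.

Lemma path_start_approx e : 0 < e -> exists z r,
  [/\ arc `[a, b] z, g z = r%:E, r * M <= 2 * I + e & `|f (h a) - f z| <= 6 * C * I + e].
Proof.
move=> e0; have [t tP] := dyadic_start_arcs.
pose A n := arc `[a, t n].
have atn n : a < t n by have [/andP[]] := tP n.
have tnb n : t n <= b by have [/andP[]] := tP n.
have muA n : mu (A n) = (M / 2 ^+ n)%:E by have [] := tP n.
have mA n : measurable (A n) := arc_segment_measurable hc (lexx a) (tnb n).
have A_sub s u : t u <= s -> A u `<=` arc `[a, s].
  by move=> tus; apply/image_subset/subset_itv; rewrite bnd_simp.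
have A_noninc n : A n.+1 `<=` A n by apply: A_sub; have [] := tP n.
have f_near eps : 0 < eps -> exists N, forall u, A N u -> `|f (h a) - f u| <= eps.
  move=> eps0; have [s /andP[sa sb] near_s] := start_arc_near eps0.
  have mus : mu (arc `[a, s]) = (m s)%:E by apply: arc_fin; rewrite ltW ?sb.
  have ms0 : 0 < m s by rewrite -lte_fin -mus; exact: arc_pos.
  have [N MN] := exists_dyadic_lt M ms0.
  have tNs : t N <= s.
    rewrite leNgt; apply/negP => stN; have : (mu (arc `[a, s]) <= mu (A N))%E.
      apply: le_measure; rewrite ?inE; [exact: arc_segment_measurable|exact: mA|].
      by apply/image_subset/subset_itv; rewrite bnd_simp ?lexx ?(ltW stN).
    by rewrite mus muA lee_fin; lra.
  by exists N => u /(A_sub _ _ tNs)/near_s.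
have intA0 : (\int[mu]_(u in A 0%N) g u <= I%:E)%E.
  rewrite -intI; apply: ge0_subset_integral => //; last exact: A_sub.
  - exact: arc_segment_measurable.
  - exact: measurable_funS mg.
have oscA n := arc_osc (lexx a) (atn n) (tnb n).
have [z [r [A0z gz rM fz]]] :=
  dyadic_chain (mu := mu) g0 mg C0 M0 mA A_noninc muA oscA f_near intA0 e0.
by exists z, r; split => //; exact: A_sub A0z.
Qed.

End path_start.

Lemma path_endpoints_dist_le {R : realType} {X : metricType R} {x0 : X}
    (mu : {measure set (borel x0) -> \bar R}) (h : R -> X) (a b : R)
    (f : X -> R) (g : X -> \bar R) (C M I : R) :
  non_atomic mu -> a < b -> {within `[a, b], continuous h} -> 0 < C ->
  mu (h @` `[a, b] : set (borel x0)) = M%:E ->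
  (forall c e, a <= c -> c < e -> e <= b -> (0 < mu (h @` `[c, e] : set (borel x0)))%E) ->
  (forall c e, a <= c -> c < e -> e <= b -> forall u v,
     (h @` `[c, e]) u -> (h @` `[c, e]) v ->
     (`|f u - f v|%:E <= C%:E * mu (h @` `[c, e] : set (borel x0)) * (g u + g v))%E) ->
  continuous f -> (forall u, (0 <= g u)%E) -> measurable_fun setT (g : borel x0 -> \bar R) ->
  (\int[mu]_(u in (h @` `[a, b] : set (borel x0))) g u)%E = I%:E ->
  `|f (h a) - f (h b)| <= 16 * C * I.
Proof.
move=> na ab hc C0 muM pos osc fc g0 mg intI.
have arcE (c e : R) : (h \o -%R) @` `[c, e] = h @` `[- e, - c].
  by rewrite -(image_opp_itv h (- e) (- c)) !opprK.
have pos' (c e : R) : - b <= c -> c < e -> e <= - a ->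
    (0 < mu ((h \o -%R) @` `[c, e] : set (borel x0)))%E.
  by move=> bc ce ea; rewrite arcE; apply: pos; lra.
have osc' (c e : R) : - b <= c -> c < e -> e <= - a -> forall u v,
    ((h \o -%R) @` `[c, e]) u -> ((h \o -%R) @` `[c, e]) v ->
    (`|f u - f v|%:E <=
     C%:E * mu ((h \o -%R) @` `[c, e] : set (borel x0)) * (g u + g v))%E.
  by move=> bc ce ea; rewrite arcE; apply: osc; lra.
have ab' : - b < - a by rewrite ltrN2.
have muM' : mu ((h \o -%R) @` `[- b, - a] : set (borel x0)) = M%:E by rewrite arcE !opprK.
have intI' : (\int[mu]_(u in ((h \o -%R) @` `[(- b)%R, (- a)%R] : set (borel x0))) g u)%E
    = I%:E by rewrite arcE !opprK.
apply/ler_addgt0Pr => eps eps0.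
pose e := eps / (2 * C + 2).
have e0 : 0 < e by rewrite divr_gt0 // addr_gt0 // mulr_gt0.
have epsE : eps = 2 * e + 2 * (C * e).
  by rewrite /e; field; rewrite gt_eqF // addr_gt0 // mulr_gt0.
have [z [r [hz gz rM fz]]] :=
  path_start_approx na ab hc C0 muM pos osc (fc (h a)) g0 mg intI e0.
have [w [s [hw gw sM fw]]] := path_start_approx na ab' (within_continuous_opp hc) C0 muM'
  pos' osc' (fc _) g0 mg intI' e0.
rewrite /= opprK in fw; rewrite arcE !opprK in hw.
have := osc a b (lexx a) ab (lexx b) z w hz hw.
rewrite muM gz gw -EFinD -!EFinM lee_fin => mid.
have mid' : C * M * (r + s) <= C * (4 * I + 2 * e).
  by rewrite -mulrA ler_pM2l //; lra.
have := ler_distD (f z) (f (h a)) (f (h b)); have := ler_distD (f w) (f z) (f (h b)).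
by rewrite (distrC (f w)); lra.
Qed.

Lemma arc_chord_oscillation {R : realType} {X : metricType R} {x0 : X}
    (mu : {measure set (borel x0) -> \bar R}) (Gam : set (@gpath R X)) (beta Cmu : R)
    (f : X -> R) (g : X -> \bar R) (p : @gpath R X) (c e : R) :
  0 < beta -> Gam `<=` Gamma_mu mu -> subpath_closed Gam ->
  (forall q, Gam q -> (((diam (Defs.Im q)) `^ beta)%:E <= Cmu%:E * mu (Defs.Im q))%E) ->
  (forall x, (0 <= g x)%E) ->
  (forall x y, (`|f x - f y|%:E <= ((mdist x y) `^ beta)%:E * (g x + g y))%E) ->
  Gam p -> pa p <= c -> c < e -> e <= pb p -> forall u v,
  (pf p @` `[c, e]) u -> (pf p @` `[c, e]) v ->
  (`|f u - f v|%:E <= Cmu%:E * mu (pf p @` `[c, e] : set (borel x0)) * (g u + g v))%E.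
Proof.
move=> beta0 GamS subc ac g0 hfg Gp pc ce ep u v hu hv.
have Gs := subc p c e Gp (conj pc (conj (ltW ce) ep)) ce.
have [[_ pcont] _] := GamS p Gp.
have cK : compact (pf p @` `[c, e]).
  have sub : `[c, e] `<=` `[pa p, pb p] by apply: subset_itv; rewrite bnd_simp.
  exact: continuous_compact (continuous_subspaceW sub pcont) (@segment_compact _ c e).
have uv_diam := mdist_le_diam cK hu hv.
apply: le_trans (hfg u v) _; rewrite lee_wpmul2r ?adde_ge0 //.
apply: le_trans (ac _ Gs); rewrite lee_fin ge0_ler_powR ?nnegrE ?(ltW beta0) ?mdist_ge0 //.
exact: le_trans (mdist_ge0 u v) uv_diam.
Qed.

Theorem lemma5p5 (R : realType) (X : metricType R) (x0 : X)
  (mu : {measure set (borel x0) -> \bar R}) (beta : R)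
  (Gam : set (@gpath R X)) (f : X -> R) (g : X -> \bar R) :
  non_atomic mu ->
  0 < beta ->
  Gam `<=` Gamma_mu mu ->
  subpath_closed Gam ->
  arc_chord mu Gam beta ->
  continuous f ->
  (forall x, (0 <= g x)%E) ->
  measurable_fun setT (g : borel x0 -> \bar R) ->
  (forall x y : X,
     (`|f x - f y|%:E <= ((mdist x y) `^ beta)%:E * (g x + g y))%E) ->
  exists2 C : R, 0 < C & upper_gradient mu Gam f (fun x => (C%:E * g x)%E).
Proof.
move=> na beta0 GamS subc [Cmu Cmu0 ac] fc g0 mg hfg.
exists (16 * Cmu); first by rewrite mulr_gt0.
split=> [x|[a b h] Gp]; first by rewrite mule_ge0 // lee_fin mulr_ge0 // ltW.
have [[_ /= hc] [/= ab [_ arcs]]] := GamS _ Gp.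
have osc := arc_chord_oscillation beta0 GamS subc ac g0 hfg Gp.
have sub c e : a <= c -> c < e -> e <= b -> is_subinterval (GPath a b h) c e.
  by move=> ac' ce eb; split => //; split => //; exact: ltW.
have [M muM] : exists M, mu (h @` `[a, b] : set (borel x0)) = M%:E.
  have [_ fin] := arcs a b (sub _ _ (lexx a) ab (lexx b)) ab.
  exists (fine (mu (h @` `[a, b] : set (borel x0)))).
  by rewrite fineK // ge0_fin_numE ?measure_ge0.
have mab := arc_segment_measurable (x0 := x0) hc (lexx a) (lexx b).
rewrite /path_integral /Defs.Im /= (ge0_integralZl_EFin _ mab) //; last 2 first.
- exact: measurable_funS mg.
- by rewrite mulr_ge0 // ltW.
move: (integral_ge0 mu (fun u _ => g0 u) (D := h @` `[a, b] : set (borel x0))).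
case intI: (\int[mu]_(x in _) g x)%E => [I| |] // _; last first.
  by rewrite gt0_muley ?lte_fin ?mulr_gt0 // leey.
rewrite -EFinM lee_fin; apply: path_endpoints_dist_le na ab hc Cmu0 muM _ osc fc g0 mg intI.
by move=> c e ac' ce eb; have [] := arcs c e (sub _ _ ac' ce eb) ce.
Qed.
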